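(* The set of outer deterministic multirelations $X\leftrightarrow\mathcal{P}Y$, ordered by $\sqsubseteq_\downarrow$ (which on this set equals $\sqsubseteq_\uparrow$ and $\sqsubseteq_\updownarrow$), is a lattice in which the supremum of $R$ and $S$ is $R\Cup S$ and the infimum is $R\Cap S$.
   Context: $R\Cup S=\{(a,A\cup B)\mid (a,A)\in R,(a,B)\in S\}$, $R\Cap S=\{(a,A\cap B)\mid (a,A)\in R,(a,B)\in S\}$. $R^{\uparrow}=\{(a,A)\mid\exists B.(a,B)\in R\wedge B\subseteq A\}$, $R^{\downarrow}=\{(a,A)\mid\exists B.(a,B)\in R\wedge A\subseteq B\}$; $R\sqsubseteq_\uparrow S\iff S\subseteq R^{\uparrow}$; $R\sqsubseteq_\downarrow S\iff R\subseteq S^{\downarrow}$; $R\sqsubseteq_\updownarrow S\iff R\sqsubseteq_\downarrow S\wedge R\sqsubseteq_\uparrow S$. A multirelation $R$ is outer deterministic if for each $a\in X$ there is exactly one $B$ with $(a,B)\in R$. *)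

Set Implicit Arguments.

Definition pset (Y : Type) := Y -> Prop.
Definition psubset {Y : Type} (A B : pset Y) : Prop := forall y, A y -> B y.
Definition punion {Y : Type} (A B : pset Y) : pset Y := fun y => A y \/ B y.
Definition pinter {Y : Type} (A B : pset Y) : pset Y := fun y => A y /\ B y.

(* A multirelation X <-> P Y: a relation between X and subsets of Y. *)
Definition mrel (X Y : Type) := X -> pset Y -> Prop.

Definition mincl {X Y : Type} (R S : mrel X Y) : Prop := forall a A, R a A -> S a A.

Definition mcup {X Y : Type} (R S : mrel X Y) : mrel X Y :=
  fun a C => exists A B, R a A /\ S a B /\ C = punion A B.
Definition mcap {X Y : Type} (R S : mrel X Y) : mrel X Y :=
  fun a C => exists A B, R a A /\ S a B /\ C = pinter A B.

Definition mup {X Y : Type} (R : mrel X Y) : mrel X Y :=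
  fun a A => exists B, R a B /\ psubset B A.
Definition mdown {X Y : Type} (R : mrel X Y) : mrel X Y :=
  fun a A => exists B, R a B /\ psubset A B.

Definition le_up {X Y : Type} (R S : mrel X Y) : Prop := mincl S (mup R).
Definition le_down {X Y : Type} (R S : mrel X Y) : Prop := mincl R (mdown S).
Definition le_updown {X Y : Type} (R S : mrel X Y) : Prop := le_down R S /\ le_up R S.

Definition outer_det {X Y : Type} (R : mrel X Y) : Prop :=
  forall a : X, exists! B : pset Y, R a B.


From Stdlib Require Import FunctionalExtensionality PropExtensionality.

(* An outer deterministic multirelation is the graph of a function X -> P Y,
   so both (R ⊑↓ S) and (R ⊑↑ S) say that the image of each point under R is
   contained in its image under S.  Under this reading R ⋓ S and R ⋒ S are the
   pointwise union and intersection, and the lattice laws are those of P Y. *)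

Section OuterDeterministic.

Context {X Y : Type}.
Implicit Types R S T : mrel X Y.

Lemma outer_det_functional {R a A B} : outer_det R -> R a A -> R a B -> A = B.
Proof.
  intros HR HA HB. destruct (HR a) as [C [_ HC]].
  rewrite <- (HC A HA), <- (HC B HB). reflexivity.
Qed.

Lemma pset_ext {A B : pset Y} : psubset A B -> psubset B A -> A = B.
Proof.
  intros HAB HBA. extensionality y.
  apply propositional_extensionality. split; auto.
Qed.

Definition le_pointwise R S : Prop :=
  forall a A B, R a A -> S a B -> psubset A B.

Lemma le_down_pointwise R {S} : outer_det S -> le_down R S <-> le_pointwise R S.
Proof.
  intros HS. split.
  - intros H a A B HA HB. destruct (H a A HA) as [B' [HB' HAB']].
    rewrite (outer_det_functional HS HB' HB) in HAB'. exact HAB'.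
  - intros H a A HA. destruct (HS a) as [B [HB _]]. exists B. eauto.
Qed.

Lemma le_up_pointwise {R} S : outer_det R -> le_up R S <-> le_pointwise R S.
Proof.
  intros HR. split.
  - intros H a A B HA HB. destruct (H a B HB) as [A' [HA' HA'B]].
    rewrite (outer_det_functional HR HA' HA) in HA'B. exact HA'B.
  - intros H a B HB. destruct (HR a) as [A [HA _]]. exists A. eauto.
Qed.

Lemma le_pointwise_refl R : outer_det R -> le_pointwise R R.
Proof.
  intros HR a A B HA HB. rewrite (outer_det_functional HR HA HB).
  intros y Hy. exact Hy.
Qed.

Lemma le_pointwise_trans R S T :
  outer_det S -> le_pointwise R S -> le_pointwise S T -> le_pointwise R T.
Proof.
  intros HS HRS HST a A C HA HC y Hy. destruct (HS a) as [B [HB _]].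
  exact (HST a B C HB HC y (HRS a A B HA HB y Hy)).
Qed.

Lemma le_pointwise_mincl {R S} :
  outer_det S -> le_pointwise R S -> le_pointwise S R -> mincl R S.
Proof.
  intros HS HRS HSR a A HA. destruct (HS a) as [B [HB _]].
  rewrite (pset_ext (HRS a A B HA HB) (HSR a B A HB HA)). exact HB.
Qed.

Lemma le_pointwise_antisym R S : outer_det R -> outer_det S ->
  le_pointwise R S -> le_pointwise S R -> R = S.
Proof.
  intros HR HS HRS HSR. extensionality a. extensionality A.
  apply propositional_extensionality.
  split; intros HA; [exact (le_pointwise_mincl HS HRS HSR a A HA)
                    | exact (le_pointwise_mincl HR HSR HRS a A HA)].
Qed.

(* [mcup] and [mcap] are [mlift2 punion] and [mlift2 pinter] up to conversion. *)
Definition mlift2 (op : pset Y -> pset Y -> pset Y) R S : mrel X Y :=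
  fun a C => exists A B, R a A /\ S a B /\ C = op A B.

Lemma mlift2_outer_det op {R S} :
  outer_det R -> outer_det S -> outer_det (mlift2 op R S).
Proof.
  intros HR HS a. destruct (HR a) as [A [HA _]]. destruct (HS a) as [B [HB _]].
  exists (op A B). split.
  - exists A, B. auto.
  - intros C [A' [B' [HA' [HB' ->]]]].
    rewrite (outer_det_functional HR HA HA'), (outer_det_functional HS HB HB').
    reflexivity.
Qed.

Lemma le_pointwise_mlift2_l op R S T :
  (forall a A B C, R a A -> S a B -> T a C -> psubset (op A B) C) ->
  le_pointwise (mlift2 op R S) T.
Proof. intros H a D C [A [B [HA [HB ->]]]]. eauto. Qed.

Lemma le_pointwise_mlift2_r op R S T :
  (forall a A B C, R a A -> S a B -> T a C -> psubset C (op A B)) ->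
  le_pointwise T (mlift2 op R S).
Proof. intros H a C D HC [A [B [HA [HB ->]]]]. eauto. Qed.

Lemma le_pointwise_mcup_l R S : outer_det R -> le_pointwise R (mcup R S).
Proof.
  intros HR. apply le_pointwise_mlift2_r. intros a A B C HA _ HC.
  rewrite (outer_det_functional HR HC HA). intros y Hy. left. exact Hy.
Qed.

Lemma le_pointwise_mcup_r R S : outer_det S -> le_pointwise S (mcup R S).
Proof.
  intros HS. apply le_pointwise_mlift2_r. intros a A B C _ HB HC.
  rewrite (outer_det_functional HS HC HB). intros y Hy. right. exact Hy.
Qed.

Lemma le_pointwise_mcup_least R S T :
  le_pointwise R T -> le_pointwise S T -> le_pointwise (mcup R S) T.
Proof.
  intros HRT HST. apply le_pointwise_mlift2_l.
  intros a A B C HA HB HC y [Hy | Hy].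
  - exact (HRT a A C HA HC y Hy).
  - exact (HST a B C HB HC y Hy).
Qed.

Lemma le_pointwise_mcap_l R S : outer_det R -> le_pointwise (mcap R S) R.
Proof.
  intros HR. apply le_pointwise_mlift2_l. intros a A B C HA _ HC.
  rewrite (outer_det_functional HR HC HA). intros y [Hy _]. exact Hy.
Qed.

Lemma le_pointwise_mcap_r R S : outer_det S -> le_pointwise (mcap R S) S.
Proof.
  intros HS. apply le_pointwise_mlift2_l. intros a A B C _ HB HC.
  rewrite (outer_det_functional HS HC HB). intros y [_ Hy]. exact Hy.
Qed.

Lemma le_pointwise_mcap_greatest R S T :
  le_pointwise T R -> le_pointwise T S -> le_pointwise T (mcap R S).
Proof.
  intros HTR HTS. apply le_pointwise_mlift2_r.
  intros a A B C HA HB HC y Hy.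
  split; [exact (HTR a C A HC HA y Hy) | exact (HTS a C B HC HB y Hy)].
Qed.

End OuterDeterministic.

Theorem proposition5p10 (X Y : Type) :
  (* on outer deterministic multirelations the three orders coincide *)
  (forall R S : mrel X Y, outer_det R -> outer_det S ->
     (le_down R S <-> le_up R S) /\ (le_down R S <-> le_updown R S)) /\
  (* le_down is a partial order on outer deterministic multirelations *)
  (forall R : mrel X Y, outer_det R -> le_down R R) /\
  (forall R S T : mrel X Y, outer_det R -> outer_det S -> outer_det T ->
     le_down R S -> le_down S T -> le_down R T) /\
  (forall R S : mrel X Y, outer_det R -> outer_det S ->
     le_down R S -> le_down S R -> R = S) /\
  (* R ⋓ S is the supremum *)
  (forall R S : mrel X Y, outer_det R -> outer_det S ->
     outer_det (mcup R S) /\ le_down R (mcup R S) /\ le_down S (mcup R S) /\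
     (forall T : mrel X Y, outer_det T -> le_down R T -> le_down S T ->
        le_down (mcup R S) T)) /\
  (* R ⋒ S is the infimum *)
  (forall R S : mrel X Y, outer_det R -> outer_det S ->
     outer_det (mcap R S) /\ le_down (mcap R S) R /\ le_down (mcap R S) S /\
     (forall T : mrel X Y, outer_det T -> le_down T R -> le_down T S ->
        le_down T (mcap R S))).
Proof.
  split; [|split; [|split; [|split; [|split]]]].
  - intros R S HR HS. unfold le_updown.
    rewrite (le_down_pointwise R HS), (le_up_pointwise S HR). tauto.
  - intros R HR. apply le_down_pointwise, le_pointwise_refl; exact HR.
  - intros R S T _ HS HT. rewrite (le_down_pointwise R HS), !(le_down_pointwise _ HT).
    apply le_pointwise_trans, HS.
  - intros R S HR HS. rewrite (le_down_pointwise R HS), (le_down_pointwise S HR).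
    apply le_pointwise_antisym; assumption.
  - intros R S HR HS.
    assert (HRS : outer_det (mcup R S)) by exact (mlift2_outer_det punion HR HS).
    rewrite !(le_down_pointwise _ HRS).
    split; [exact HRS | split; [|split]].
    + apply le_pointwise_mcup_l, HR.
    + apply le_pointwise_mcup_r, HS.
    + intros T HT. rewrite !(le_down_pointwise _ HT). apply le_pointwise_mcup_least.
  - intros R S HR HS.
    assert (HRS : outer_det (mcap R S)) by exact (mlift2_outer_det pinter HR HS).
    rewrite (le_down_pointwise _ HR), (le_down_pointwise _ HS).
    split; [exact HRS | split; [|split]].
    + apply le_pointwise_mcap_l, HR.
    + apply le_pointwise_mcap_r, HS.
    + intros T HT. rewrite (le_down_pointwise _ HR), (le_down_pointwise _ HS),
        (le_down_pointwise _ HRS). apply le_pointwise_mcap_greatest.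
Qed.
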